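(* Let $(E,\mathcal{I})$ be the partition matroid given by a partition $E_1,\dots,E_b$ of $E$ and positive integers $k_z\le|E_z|$. Suppose $f:2^E\times O^E\to\mathbb{R}_{\ge0}$ is adaptive monotone and adaptive submodular with respect to $p(\phi)$. Then the adaptive hybrid policy $\pi^m=\pi^{mw}@\pi^{ma}$ satisfies $f_{avg}(\pi^*_{avg})\le 3\,f_{avg}(\pi^m)$, where $\pi^*_{avg}$ maximizes $f_{avg}(\pi)$ over policies $\pi$ with $E(\pi,\phi)\in\mathcal{I}$ for all $\phi\in U^+$.
   Context: Setting. $E$ is a finite set of $n$ items and $O$ a finite set of states. A realization is a function $\phi:E\to O$; $p$ is a probability distribution (prior) on the set of all realizations, $\Phi$ denotes a random realization with law $p$, and $U^+=\{\phi: p(\phi)>0\}$. A partial realization is a function $\psi:S\to O$ with $S\subseteq E$, $\mathrm{dom}(\psi)=S$; it is identified with the set of pairs $\{(e,\psi(e)):e\in S\}$, so $\psi\subseteq\psi'$ means $\mathrm{dom}(\psi)\subseteq\mathrm{dom}(\psi')$ and they agree on $\mathrm{dom}(\psi)$. A realization $\phi$ is consistent with $\psi$, written $\phi\sim\psi$, if it agrees with $\psi$ on $\mathrm{dom}(\psi)$. Only partial realizations with $\Pr[\Phi\sim\psi]>0$ are considered, and $p(\phi\mid\psi)=\Pr[\Phi=\phi\mid\Phi\sim\psi]$. For $S\subseteq E$ and a partial realization $\psi$, $f(S,\psi)=\mathbb{E}[f(S,\Phi)\mid\Phi\sim\psi]$. For $e\notin\mathrm{dom}(\psi)$, let $O(e,\psi)=\{o\in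 O:\exists\phi\text{ with }p(\phi\mid\psi)>0,\ \phi(e)=o\}$ and define the worst-case marginal utility $f_{wc}(e\mid\psi)=\min_{o\in O(e,\psi)}\{f(\mathrm{dom}(\psi)\cup\{e\},\psi\cup\{(e,o)\})-f(\mathrm{dom}(\psi),\psi)\}$ and the expected marginal utility $f_{avg}(e\mid\psi)=\mathbb{E}[f(\mathrm{dom}(\psi)\cup\{e\},\Phi)-f(\mathrm{dom}(\psi),\Phi)\mid\Phi\sim\psi]$. $f$ is adaptive submodular if $f_{avg}(e\mid\psi)\ge f_{avg}(e\mid\psi')$ for all partial realizations $\psi\subseteq\psi'$ and $e\in E\setminus\mathrm{dom}(\psi')$, and adaptive monotone if $f_{avg}(e\mid\psi)\ge0$ for all $\psi$ and $e\notin\mathrm{dom}(\psi)$. Policies. A (deterministic) policy $\pi$ is a rule which, given the current observation (the partial realization of the items selected so far), either selects a new item or stops; after an item $e$ is selected under realization $\phi$, the state $\phi(e)$ is observed. $E(\pi,\phi)$ is the set of items selected by $\pi$ under $\phi$, and $f_{avg}(\pi)=\mathbb{E}[f(E(\pi,\Phi),\Phi)]$. The concatenation $\pi@\pi'$ runs $\pi$ and then runs $\pi'$ from scratch, ignoring the observations obtained by $\pi$; its selected set is the union of the two. Partition matroid: $\mathcal{I}=\{I\subseteq E:|I\cap E_z|\le k_z\ \forall z\in[b]\}$. Policy $\pi^{mw}$: starting from the empty observation $\psi=\emptyset$, for $z=1,\dots,b$ in turn, perform $\lfloor k_z/2\rfloor$ iterations, each selecting $e\in\arg\max_{e\in E_z\setminus\mathrm{dom}(\psi)}f_{wc}(e\mid\psi)$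 for the current observation $\psi$, observing $\Phi(e)$ and adding $(e,\Phi(e))$ to $\psi$. Policy $\pi^{ma}$: identical except that each meta-round $z$ performs $\lceil k_z/2\rceil$ iterations and uses $f_{avg}(e\mid\psi)$ in place of $f_{wc}(e\mid\psi)$. Ties are broken arbitrarily. $\pi^m=\pi^{mw}@\pi^{ma}$. *)

From mathcomp Require Import all_boot all_order all_algebra.
Set Implicit Arguments. Unset Strict Implicit. Unset Printing Implicit Defensive.
Import Order.TTheory GRing.Theory Num.Theory.
Local Open Scope ring_scope.

Section Adaptive.
Variables (E O : finType) (R : realFieldType).

Definition realization := {ffun E -> O}.
(* partial realizations: psi e = Some o iff (e,o) in psi; dom psi = {e | psi e <> None} *)
Definition prt := {ffun E -> option O}.

Definition dom (psi : prt) : {set E} := [set e | psi e != None].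
Definition empty_prt : prt := [ffun _ => None].
Definition ext (psi : prt) (e : E) (o : O) : prt :=
  [ffun x => if x == e then Some o else psi x].

Definition consistent (phi : realization) (psi : prt) : bool :=
  [forall e, if psi e is Some o then phi e == o else true].
Definition subprt (psi psi' : prt) : bool :=
  [forall e, (psi e != None) ==> (psi' e == psi e)].

Variables (p : realization -> R) (f : {set E} -> realization -> R).

Definition prob (psi : prt) : R := \sum_(phi | consistent phi psi) p phi.
Definition fcond (S : {set E}) (psi : prt) : R :=
  (\sum_(phi | consistent phi psi) p phi * f S phi) / prob psi.
Definition favg (e : E) (psi : prt) : R :=
  (\sum_(phi | consistent phi psi) p phi * (f (e |: dom psi) phi - f (dom psi) phi))
    / prob psi.
Definition Oset (e : E) (psi : prt) : {set O} :=
  [set o | [exists phi, [&& consistent phi psi, 0 < p phi & phi e == o]]].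
(* f_wc(e | psi): minimum over O(e,psi) (convention 0 if O(e,psi) empty,
   which only happens when Pr[Phi ~ psi] = 0) *)
Definition fwc (e : E) (psi : prt) : R :=
  let g o := fcond (e |: dom psi) (ext psi e o) - fcond (dom psi) psi in
  if [pick o in Oset e psi] is Some o0 then
    \big[Num.min/g o0]_(o in Oset e psi) g o
  else 0.

Definition adaptive_monotone : Prop :=
  forall (psi : prt) (e : E), 0 < prob psi -> e \notin dom psi -> 0 <= favg e psi.
Definition adaptive_submodular : Prop :=
  forall (psi psi' : prt) (e : E), subprt psi psi' -> 0 < prob psi -> 0 < prob psi' ->
    e \notin dom psi' -> favg e psi' <= favg e psi.

(* Deterministic policies: observation -> item to select (Some e) or stop (None). *)
Definition policy := prt -> option E.
Definition pstep (pi : policy) (phi : realization) (psi : prt) : prt :=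
  if pi psi is Some e then (if e \in dom psi then psi else ext psi e (phi e)) else psi.
(* each effective step adds a new item, so #|E| steps suffice *)
Definition prun (pi : policy) (phi : realization) : prt :=
  iter #|E| (pstep pi phi) empty_prt.
Definition sel (pi : policy) (phi : realization) : {set E} := dom (prun pi phi).
Definition favg_pol (pi : policy) : R := \sum_phi p phi * f (sel pi phi) phi.

(* partition matroid: part e = z  iff  e \in E_z *)
Variables (b : nat) (part : E -> 'I_b) (k : 'I_b -> nat).
Definition Epart (z : 'I_b) : {set E} := [set e | part e == z].
Definition indep (S : {set E}) : bool := [forall z, #|S :&: Epart z| <= k z]%N.

(* schedules of the meta-rounds z = 1..b: floor(k_z/2) resp. ceil(k_z/2) iterations *)
Definition sched_w : seq 'I_b := flatten [seq nseq (k z)./2 z | z <- enum 'I_b].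
Definition sched_a : seq 'I_b := flatten [seq nseq (uphalf (k z)) z | z <- enum 'I_b].

Definition greedy_choice (crit : E -> prt -> R) (choose : prt -> 'I_b -> E) : Prop :=
  forall (psi : prt) (z : 'I_b), (exists e, e \in Epart z :\: dom psi) ->
    choose psi z \in Epart z :\: dom psi /\
    (forall e, e \in Epart z :\: dom psi -> crit e psi <= crit (choose psi z) psi).

Definition greedy_run (choose : prt -> 'I_b -> E) (sched : seq 'I_b)
    (phi : realization) : prt :=
  foldl (fun psi z => let e := choose psi z in ext psi e (phi e)) empty_prt sched.

(* f_avg(pi^mw @ pi^ma): selected set is the union of the two runs *)
Definition favg_hybrid (chw cha : prt -> 'I_b -> E) : R :=
  \sum_phi p phi *
    f (dom (greedy_run chw sched_w phi) :|: dom (greedy_run cha sched_a phi)) phi.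

End Adaptive.

From mathcomp Require Import all_boot all_order all_algebra lra.
Import Order.TTheory GRing.Theory Num.Theory.
Local Open Scope ring_scope.
Set Implicit Arguments. Unset Strict Implicit. Unset Printing Implicit Defensive.

(* A run of a policy under the realization phi is described by the sequence of
   observations it produces.  Every such observation process is "adapted": its
   value at phi is consistent with phi and is the same for every realization
   consistent with it.  Conditioning on the value of an adapted process (the
   tower property) turns the expected marginal gain of one more selection into
   the expected value of f_avg at the current observation.  Telescoping over
   the steps of a run gives, for any adapted observation a and any run Q,
     (1) E[f(a)] <= E[f(a u Q)]                         (adaptive monotonicity),
     (2) E[f(a u Q)] - E[f(a)] <= E[sum_{e in Q} f_avg(e | a)]
                                                   (adaptive submodularity),
     (3) E[f(Q)] - E[f(0)] = E[sum_t f_avg(e_t | Q_t)].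
   For the average-case greedy policy pi^ma, whose run A is split into meta-rounds
   of ceil(k_z/2) picks, every item of an independent set that lies in E_z has
   marginal value at the end of A at most that of each of the picks of round z, so
   a double-counting argument bounds E[sum_{e in pi} f_avg(e | A)] by twice the
   gain (3) of A.  Chaining (1), (2) and this bound gives
   f_avg(pi) <= 3 E[f(A)] <= 3 f_avg(pi^mw @ pi^ma), the last step again by (1);
   so the worst-case half pi^mw only enters through monotonicity. *)

Lemma sum_le_avg (R : realFieldType) (I J : finType) (P : pred I) (Q : pred J)
    (a : I -> R) (c : J -> R) (m : nat) :
  (0 < #|Q|)%N -> (#|P| <= m * #|Q|)%N -> (forall j, Q j -> 0 <= c j) ->
  (forall i j, P i -> Q j -> a i <= c j) ->
  \sum_(i | P i) a i <= m%:R * \sum_(j | Q j) c j.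
Proof.
move=> Q_gt0 PQ c_ge0 le_ac; set C := \sum_(j | Q j) c j.
have C_ge0 : 0 <= C by exact: sumr_ge0.
rewrite -(ler_pM2l (_ : 0 < #|Q|%:R)) ?ltr0n //.
have -> : #|Q|%:R * \sum_(i | P i) a i = \sum_(i | P i) \sum_(j | Q j) a i.
  by rewrite mulr_sumr; apply: eq_bigr => i _; rewrite sumr_const mulr_natl.
apply: (@le_trans _ _ (\sum_(i | P i) C)).
  by apply: ler_sum => i Pi; apply: ler_sum => j Qj; exact: le_ac.
rewrite sumr_const -[C *+ _]mulr_natl mulrA -natrM mulnC.
by apply: ler_wpM2r => //; rewrite ler_nat.
Qed.

Lemma card_nth_eq (T : eqType) (s : seq T) (x0 z : T) :
  #|[pred t : 'I_(size s) | nth x0 s t == z]| = count_mem z s.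
Proof.
rewrite -[in RHS](mkseq_nth x0 s) /mkseq count_map -val_enum_ord count_map.
rewrite cardE /enum_mem size_filter count_filter.
by apply: eq_count => t; rewrite !inE andbT.
Qed.

Section Adaptive.
Variables (E O : finType) (R : realFieldType).
Variables (p : realization E O -> R) (f : {set E} -> realization E O -> R).
Hypothesis p_ge0 : forall phi, 0 <= p phi.

Local Notation prt := (prt E O).
Local Notation rlz := (realization E O).

Lemma consP (phi : rlz) (psi : prt) :
  reflect (forall e o, psi e = Some o -> phi e = o) (consistent phi psi).
Proof.
apply: (iffP forallP) => [H e o He | H e].
  by move: (H e); rewrite He => /eqP.
by case He: (psi e) => [o|] //; rewrite (H _ _ He).
Qed.

Lemma subprtP (psi psi' : prt) :
  reflect (forall e o, psi e = Some o -> psi' e = Some o) (subprt psi psi').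
Proof.
apply: (iffP forallP) => [H e o He | H e].
  by move: (H e); rewrite He /= => /eqP.
by case He: (psi e) => [o|] //=; rewrite (H _ _ He).
Qed.

Lemma in_dom e (psi : prt) : (e \in dom psi) = (psi e != None).
Proof. by rewrite inE. Qed.

Lemma dom0 : dom (empty_prt E O) = set0.
Proof. by apply/setP => x; rewrite in_dom ffunE inE. Qed.

Lemma dom_ext (psi : prt) e o : dom (ext psi e o) = e |: dom psi.
Proof. by apply/setP => x; rewrite in_setU1 !in_dom ffunE; case: (x == e). Qed.

Lemma cons0 (phi : rlz) : consistent phi (empty_prt E O).
Proof. by apply/consP => e o; rewrite ffunE. Qed.

Lemma subprt_refl (psi : prt) : subprt psi psi.
Proof. exact/subprtP. Qed.

Lemma subprt_trans (psi1 psi2 psi3 : prt) :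
  subprt psi1 psi2 -> subprt psi2 psi3 -> subprt psi1 psi3.
Proof. by move=> /subprtP H1 /subprtP H2; apply/subprtP => e o /H1 /H2. Qed.

Lemma subprt_dom (psi psi' : prt) : subprt psi psi' -> dom psi \subset dom psi'.
Proof.
move=> /subprtP H; apply/subsetP => x; rewrite !in_dom.
by case Hx: (psi x) => [o|] //; rewrite (H _ _ Hx).
Qed.

Lemma cons_sub (phi : rlz) (psi psi' : prt) :
  subprt psi psi' -> consistent phi psi' -> consistent phi psi.
Proof. by move=> /subprtP H /consP C; apply/consP => e o /H /C. Qed.

Lemma sub_ext (phi : rlz) (psi : prt) e :
  consistent phi psi -> subprt psi (ext psi e (phi e)).
Proof.
move=> /consP C; apply/subprtP => x o Hx; rewrite ffunE.
by case: (x =P e) => [Exe|_] //; subst x; rewrite (C _ _ Hx).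
Qed.

Lemma cons_ext (phi : rlz) (psi : prt) e :
  consistent phi psi -> consistent phi (ext psi e (phi e)).
Proof.
move=> /consP C; apply/consP => x o; rewrite ffunE.
by case: (x =P e) => [-> [<-]|_ /C].
Qed.

Definition merge (a q : prt) : prt := [ffun x => if a x is Some o then Some o else q x].

Lemma dom_merge (a q : prt) : dom (merge a q) = dom a :|: dom q.
Proof. by apply/setP => x; rewrite in_setU !in_dom ffunE; case: (a x). Qed.

Lemma merge0 (q : prt) : merge (empty_prt E O) q = q.
Proof. by apply/ffunP => x; rewrite !ffunE. Qed.

Lemma sub_merge (a q : prt) : subprt a (merge a q).
Proof. by apply/subprtP => x o H; rewrite ffunE H. Qed.

Lemma cons_merge (phi : rlz) (a q : prt) :
  consistent phi a -> consistent phi q -> consistent phi (merge a q).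
Proof.
move=> /consP Ca /consP Cq; apply/consP => x o; rewrite ffunE.
by case Hx: (a x) => [o'|]; [move=> [<-]; apply: Ca | apply: Cq].
Qed.

Lemma cons_merge_inv (phi phi0 : rlz) (a q : prt) :
  consistent phi0 a -> consistent phi0 q ->
  consistent phi (merge a q) -> consistent phi a /\ consistent phi q.
Proof.
move=> /consP Ca /consP Cq /consP C; split; apply/consP => x o H.
  by apply: C; rewrite ffunE H.
case Hx: (a x) => [o'|]; last by apply: C; rewrite ffunE Hx.
by have := Ca _ _ Hx; rewrite (Cq _ _ H) => ->; apply: C; rewrite ffunE Hx.
Qed.

(* Adapted observation processes: G phi is what a policy has observed under phi,
   so it is consistent with phi and determined by its own content. *)
Definition adapted (G : rlz -> prt) : Prop :=
  forall phi, consistent phi (G phi) /\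
    forall phi', consistent phi' (G phi) -> G phi' = G phi.

Lemma adapted_const (psi : prt) :
  (forall phi, consistent phi psi) -> adapted (fun _ => psi).
Proof. by move=> H phi; split. Qed.

Lemma adapted_merge (a q : rlz -> prt) :
  adapted a -> adapted q -> adapted (fun phi => merge (a phi) (q phi)).
Proof.
move=> Ha Hq phi; have [Ca Ea] := Ha phi; have [Cq Eq] := Hq phi.
split; first exact: cons_merge.
by move=> phi' /(cons_merge_inv Ca Cq) [/Ea -> /Eq ->].
Qed.

Definition step (oe : option E) (phi : rlz) (psi : prt) : prt :=
  if oe is Some e then ext psi e (phi e) else psi.

Lemma adapted_step (G : rlz -> prt) (rule : prt -> option E) :
  adapted G -> adapted (fun phi => step (rule (G phi)) phi (G phi)).
Proof.
move=> HG phi; have [C EG] := HG phi.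
case Hn: (rule (G phi)) => [e|] /=; last first.
  by split=> // phi' C'; rewrite (EG _ C') Hn.
split; first exact: cons_ext.
move=> phi' C'; have C1 : consistent phi' (G phi) by apply: cons_sub C'; apply: sub_ext.
rewrite (EG _ C1) Hn /=; congr (ext _ _ _).
by move/consP: C' => /(_ e (phi e)); apply; rewrite ffunE eqxx.
Qed.

Lemma prob_ge (phi : rlz) (psi : prt) : consistent phi psi -> p phi <= prob p psi.
Proof. by move=> C; rewrite /prob (bigD1 phi) //= lerDl sumr_ge0. Qed.

Lemma prob_ge0 (psi : prt) : 0 <= prob p psi.
Proof. exact: sumr_ge0. Qed.

Lemma favg_dom e (psi : prt) : e \in dom psi -> favg p f e psi = 0.
Proof.
move=> He; rewrite /favg; have -> : e |: dom psi = dom psi by apply/setUidPr; rewrite sub1set.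
by rewrite big1 ?mul0r // => phi _; rewrite subrr mulr0.
Qed.

(* f_avg(e | psi) Pr[Phi ~ psi] is the unnormalized conditional expectation,
   also when Pr[Phi ~ psi] = 0. *)
Lemma favg_num e (psi : prt) : favg p f e psi * prob p psi =
  \sum_(phi | consistent phi psi) p phi * (f (e |: dom psi) phi - f (dom psi) phi).
Proof.
have [P0|nz] := eqVneq (prob p psi) 0; last by rewrite /favg divfK.
rewrite P0 mulr0 big1 // => phi C.
by rewrite (psumr_eq0P (fun i _ => p_ge0 i) P0 C) mul0r.
Qed.

Lemma tower (G : rlz -> prt) (F : rlz -> R) : adapted G ->
  \sum_phi F phi =
  \sum_(psi in [set G x | x in [set: rlz]]) \sum_(phi | consistent phi psi) F phi.
Proof.
move=> HG; transitivity (\sum_(phi in [set: rlz]) F phi).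
  by apply: eq_bigl => x; rewrite inE.
rewrite (partition_big_imset G); apply: eq_bigr => psi /imsetP [x _ ->].
apply: eq_bigl => phi; rewrite inE /=; apply/eqP/idP => [<-|C].
  exact: (HG phi).1.
exact: (HG x).2.
Qed.

Definition gain (oe : option E) (psi : prt) (phi : rlz) : R :=
  if oe is Some e then f (e |: dom psi) phi - f (dom psi) phi else 0.
Definition exp_gain (oe : option E) (psi : prt) : R :=
  if oe is Some e then favg p f e psi else 0.

Lemma expected_gain (G : rlz -> prt) (choice : rlz -> option E) : adapted G ->
  (forall phi phi', consistent phi' (G phi) -> choice phi' = choice phi) ->
  \sum_phi p phi * gain (choice phi) (G phi) phi =
  \sum_phi p phi * exp_gain (choice phi) (G phi).
Proof.
move=> HG Hchoice; rewrite (tower _ HG) [RHS](tower _ HG).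
apply: eq_bigr => psi /imsetP [x _ ->].
rewrite (eq_bigr (fun phi => p phi * gain (choice x) (G x) phi)); last first.
  by move=> phi C; rewrite ((HG x).2 _ C) (Hchoice _ _ C).
rewrite [RHS](eq_bigr (fun phi => p phi * exp_gain (choice x) (G x))); last first.
  by move=> phi C; rewrite ((HG x).2 _ C) (Hchoice _ _ C).
case: (choice x) => [e|] /=; last by rewrite !big1 // => *; rewrite mulr0.
by rewrite -big_distrl /= mulrC favg_num.
Qed.

Fixpoint run (rule : nat -> prt -> option E) (t : nat) (phi : rlz) : prt :=
  if t is t'.+1 then step (rule t' (run rule t' phi)) phi (run rule t' phi)
  else empty_prt E O.

Lemma adapted_run rule t : adapted (run rule t).
Proof.
elim: t => [|t IH]; first exact/adapted_const/cons0.
exact: (adapted_step (rule t) IH).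
Qed.

Lemma cons_run rule t phi : consistent phi (run rule t phi).
Proof. exact: (adapted_run rule t phi).1. Qed.

Lemma sub_run rule t t' phi : (t <= t')%N -> subprt (run rule t phi) (run rule t' phi).
Proof.
elim: t' => [|t' IH]; first by rewrite leqn0 => /eqP ->; apply: subprt_refl.
rewrite leq_eqVlt => /orP [/eqP ->|]; first exact: subprt_refl.
rewrite ltnS => /IH H; apply: subprt_trans H _ => /=.
case: (rule t' _) => [e|] /=; last exact: subprt_refl.
exact: sub_ext (cons_run _ _ _).
Qed.

Lemma run_step_gain (a : rlz -> prt) rule t : adapted a ->
  \sum_phi p phi * f (dom (a phi) :|: dom (run rule t.+1 phi)) phi
  - \sum_phi p phi * f (dom (a phi) :|: dom (run rule t phi)) phi
  = \sum_phi p phi * exp_gain (rule t (run rule t phi)) (merge (a phi) (run rule t phi)).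
Proof.
move=> Ha; rewrite -sumrB.
set G := fun phi => merge (a phi) (run rule t phi).
transitivity (\sum_phi p phi * gain (rule t (run rule t phi)) (G phi) phi).
  apply: eq_bigr => phi _; rewrite -mulrBr /=; congr (_ * _).
  case: (rule t _) => [e|] /=; last by rewrite subrr.
  by rewrite /G dom_ext dom_merge setUCA.
apply: (expected_gain (G := G)); first exact: adapted_merge (adapted_run _ _).
move=> phi phi' /(cons_merge_inv (Ha phi).1 (cons_run rule t phi)) [_ C].
by rewrite ((adapted_run rule t phi).2 _ C).
Qed.

Lemma union_run_telescope (a : rlz -> prt) (rule : nat -> prt -> option E) T : adapted a ->
  \sum_phi p phi * f (dom (a phi) :|: dom (run rule T phi)) phi
  - \sum_phi p phi * f (dom (a phi)) phi
  = \sum_(t < T) \sum_phi p phi *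
      exp_gain (rule t (run rule t phi)) (merge (a phi) (run rule t phi)).
Proof.
move=> Ha; elim: T => [|T IH].
  rewrite big_ord0; apply/eqP; rewrite subr_eq0; apply/eqP.
  by apply: eq_bigr => phi _; rewrite /= dom0 setU0.
by rewrite big_ord_recr /= -IH -(run_step_gain _ _ Ha) addrC addrA subrK.
Qed.

Lemma run_telescope (rule : nat -> prt -> option E) T :
  \sum_phi p phi * f (dom (run rule T phi)) phi - \sum_phi p phi * f set0 phi
  = \sum_(t < T) \sum_phi p phi * exp_gain (rule t (run rule t phi)) (run rule t phi).
Proof.
have adapted_empty : adapted (fun _ => empty_prt E O) by apply/adapted_const/cons0.
have := union_run_telescope rule T adapted_empty.
by rewrite dom0; under eq_bigr do rewrite set0U; under [in RHS]eq_bigr do under eq_bigr do rewrite merge0.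
Qed.

Hypothesis mono : adaptive_monotone p f.
Hypothesis subm : adaptive_submodular p f.

Lemma favg_ge0 e (psi : prt) : 0 <= favg p f e psi.
Proof.
have [He|He] := boolP (e \in dom psi); first by rewrite favg_dom.
have [P0|nz] := eqVneq (prob p psi) 0; first by rewrite /favg P0 invr0 mulr0.
by apply: mono => //; rewrite lt_def nz prob_ge0.
Qed.

Lemma exp_gain_ge0 oe (psi : prt) : 0 <= exp_gain oe psi.
Proof. by case: oe => [e|] //=; exact: favg_ge0. Qed.

Lemma expect_le_union_run (a : rlz -> prt) (rule : nat -> prt -> option E) T : adapted a ->
  \sum_phi p phi * f (dom (a phi)) phi
  <= \sum_phi p phi * f (dom (a phi) :|: dom (run rule T phi)) phi.
Proof.
move=> Ha; rewrite -subr_ge0 (union_run_telescope _ _ Ha).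
by do 2![apply: sumr_ge0 => ? _]; rewrite mulr_ge0 ?exp_gain_ge0.
Qed.

Lemma run_gains_le_marginals (a : rlz -> prt) (rule : nat -> prt -> option E) T phi :
  0 < p phi -> consistent phi (a phi) ->
  \sum_(t < T) exp_gain (rule t (run rule t phi)) (merge (a phi) (run rule t phi))
  <= \sum_(e in dom (run rule T phi)) favg p f e (a phi).
Proof.
move=> p_gt0 Ca; elim: T => [|T IH]; first by rewrite big_ord0 sumr_ge0 // => e _; exact: favg_ge0.
set Q := run rule T phi; have CQ : consistent phi Q by exact: cons_run.
rewrite big_ord_recr /=; case: (rule T Q) => [e|] /=; last by rewrite addr0.
have [eQ|eQ] := boolP (e \in dom Q).
  rewrite favg_dom ?addr0; last by rewrite dom_merge in_setU eQ orbT.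
  by rewrite dom_ext (setUidPr _) // sub1set.
rewrite dom_ext big_setU1 //= addrC; apply: lerD IH.
have [ea|ea] := boolP (e \in dom (a phi)).
  by rewrite !favg_dom // dom_merge in_setU ea.
apply: subm; first exact: sub_merge.
- exact: lt_le_trans p_gt0 (prob_ge Ca).
- exact: lt_le_trans p_gt0 (prob_ge (cons_merge Ca CQ)).
by rewrite dom_merge in_setU negb_or ea eQ.
Qed.

Lemma union_run_le (a : rlz -> prt) (rule : nat -> prt -> option E) T : adapted a ->
  \sum_phi p phi * f (dom (a phi) :|: dom (run rule T phi)) phi
  - \sum_phi p phi * f (dom (a phi)) phi
  <= \sum_phi p phi * \sum_(e in dom (run rule T phi)) favg p f e (a phi).
Proof.
move=> Ha; rewrite (union_run_telescope _ _ Ha) exchange_big /=; apply: ler_sum => phi _.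
rewrite -mulr_sumr; have [p0|pnz] := eqVneq (p phi) 0; first by rewrite p0 !mul0r.
apply: ler_wpM2l => //; apply: run_gains_le_marginals (Ha phi).1.
by rewrite lt_def pnz p_ge0.
Qed.

(* prun (which ignores reselections) is the run of the constant rule, since
   reselecting an observed item leaves a consistent observation unchanged. *)
Lemma prun_run (pi : policy E O) phi : prun pi phi = run (fun _ => pi) #|E| phi.
Proof.
rewrite /prun; elim: #|E| => [|s IH] //=; rewrite IH /pstep.
case: (pi _) => [e|] //=; case: ifP => // He.
apply/ffunP => x; rewrite ffunE; case: (x =P e) => // ->.
move: He; rewrite in_dom; case Hx: (run _ s phi e) => [o|] // _.
by move/consP: (cons_run (fun _ => pi) s phi) => /(_ _ _ Hx) ->.
Qed.

Section Greedy.
Variables (b : nat) (part : E -> 'I_b) (k : 'I_b -> nat).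

Definition greedy_rule (ch : prt -> 'I_b -> E) (sch : seq 'I_b) (t : nat) (psi : prt) :
  option E := omap (ch psi) (onth sch t).

Lemma greedy_rule_nth ch sch t psi z0 : (t < size sch)%N ->
  greedy_rule ch sch t psi = Some (ch psi (nth z0 sch t)).
Proof.
by move=> lt_t; rewrite /greedy_rule -odflt_onth; move: (onthTE sch t); rewrite lt_t; case: onth.
Qed.

Lemma greedy_run_run ch sch phi :
  greedy_run ch sch phi = run (greedy_rule ch sch) (size sch) phi.
Proof.
suff prefix s s' : greedy_run ch s phi = run (greedy_rule ch (s ++ s')) (size s) phi.
  by rewrite (prefix sch [::]) cats0.
elim/last_ind: s s' => [//|s z IH] s'.
rewrite /greedy_run foldl_rcons -/(greedy_run ch s phi) (IH (z :: s')) cat_rcons size_rcons /=.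
by rewrite [greedy_rule _ _ _ _]/greedy_rule onth_cat ltnn subnn.
Qed.

Lemma greedy_dominates ch sch phi t e z0 :
  greedy_choice part (favg p f) ch -> 0 < p phi -> (t < size sch)%N ->
  part e = nth z0 sch t ->
  favg p f e (run (greedy_rule ch sch) (size sch) phi)
  <= exp_gain (greedy_rule ch sch t (run (greedy_rule ch sch) t phi))
              (run (greedy_rule ch sch) t phi).
Proof.
move=> greedy p_gt0 lt_t He; set A := run (greedy_rule ch sch).
rewrite (greedy_rule_nth _ _ z0 lt_t) /=.
have [eT|eT] := boolP (e \in dom (A (size sch) phi)); first by rewrite favg_dom // favg_ge0.
have At_sub : subprt (A t phi) (A (size sch) phi) by apply: sub_run; exact: ltnW.
have et : e \notin dom (A t phi) by apply: contra eT; apply: (subsetP (subprt_dom At_sub)).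
have e_free : e \in Epart part (nth z0 sch t) :\: dom (A t phi).
  by rewrite in_setD et inE He eqxx.
apply: (@le_trans _ _ (favg p f e (A t phi))).
  by apply: subm At_sub _ _ eT; exact: lt_le_trans p_gt0 (prob_ge (cons_run _ _ _)).
exact: (greedy _ _ (ex_intro _ e e_free)).2.
Qed.

Lemma count_sched_a z : count_mem z (sched_a k) = uphalf (k z).
Proof.
rewrite /sched_a count_flatten -map_comp sumnE big_map.
rewrite (bigD1_seq z) ?mem_enum ?enum_uniq //= count_nseq /= eqxx mul1n.
by rewrite big1_seq ?addn0 // => z' /andP [nz _]; rewrite count_nseq /= (negbTE nz).
Qed.

Hypothesis k_gt0 : forall z, (0 < k z)%N.

Local Notation ma_run ch := (run (greedy_rule ch (sched_a k))).

Lemma indep_marginals_le_greedy ch phi (S : {set E}) :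
  greedy_choice part (favg p f) ch -> 0 < p phi -> indep part k S ->
  \sum_(e in S) favg p f e (ma_run ch (size (sched_a k)) phi)
  <= 2 * \sum_(t < size (sched_a k))
           exp_gain (greedy_rule ch (sched_a k) t (ma_run ch t phi)) (ma_run ch t phi).
Proof.
move=> greedy p_gt0 /forallP S_indep.
have [->|[e0 _]] := set_0Vmem S.
  by rewrite big_set0 mulr_ge0 // sumr_ge0 // => t _; exact: exp_gain_ge0.
set sch := sched_a k; pose round (t : 'I_(size sch)) := nth (part e0) sch t.
rewrite (partition_big part predT) // [X in _ <= 2 * X](partition_big round predT) //.
rewrite mulr_sumr; apply: ler_sum => z _.
have card_round : #|(fun t => true && (round t == z))| = uphalf (k z).
  by rewrite -count_sched_a -(card_nth_eq _ (part e0)); apply: eq_card.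
have card_S : (#|(fun e => (e \in S) && (part e == z))| <= k z)%N.
  by rewrite (eq_card (B := S :&: Epart part z)) ?S_indep // => e; rewrite !inE.
apply: sum_le_avg.
- by rewrite card_round; case: (k z) (k_gt0 z).
- by rewrite card_round mul2n (leq_trans card_S) // -leq_uphalf_double.
- by move=> t _; exact: exp_gain_ge0.
move=> e t /andP [_ /eqP He] /andP [_ /eqP Ht].
by apply: greedy_dominates => //; rewrite He -Ht.
Qed.

Lemma expected_marginals_le_greedy ch (S : rlz -> {set E}) :
  greedy_choice part (favg p f) ch -> (forall phi, 0 < p phi -> indep part k (S phi)) ->
  \sum_phi p phi * \sum_(e in S phi) favg p f e (ma_run ch (size (sched_a k)) phi)
  <= 2 * \sum_(t < size (sched_a k)) \sum_phi p phi *
           exp_gain (greedy_rule ch (sched_a k) t (ma_run ch t phi)) (ma_run ch t phi).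
Proof.
move=> greedy S_indep; rewrite exchange_big mulr_sumr; apply: ler_sum => phi _.
rewrite -mulr_sumr mulrCA; have [p0|pnz] := eqVneq (p phi) 0; first by rewrite p0 !mul0r.
have p_gt0 : 0 < p phi by rewrite lt_def pnz p_ge0.
by apply: ler_wpM2l => //; apply: indep_marginals_le_greedy => //; exact: S_indep.
Qed.

(* The chain is
   E f(P) <= E f(P u A) <= E f(A) + 2 (E f(A) - E f(0)) <= 3 E f(A) <= 3 E f(A u W). *)
Lemma greedy_three_approx (rule rule' : nat -> prt -> option E) T T' ch :
  (forall S phi, 0 <= f S phi) -> greedy_choice part (favg p f) ch ->
  (forall phi, 0 < p phi -> indep part k (dom (run rule T phi))) ->
  \sum_phi p phi * f (dom (run rule T phi)) phi
  <= 3 * \sum_phi p phi *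
           f (dom (ma_run ch (size (sched_a k)) phi) :|: dom (run rule' T' phi)) phi.
Proof.
move=> f_ge0 greedy P_indep; set Ta := size (sched_a k).
have adapted_A : adapted (ma_run ch Ta) by exact: adapted_run.
have mono_PA := expect_le_union_run (greedy_rule ch (sched_a k)) Ta (adapted_run rule T).
have subm_AP := union_run_le rule T adapted_A.
have double := expected_marginals_le_greedy greedy P_indep.
have gain_A := run_telescope (greedy_rule ch (sched_a k)) Ta.
have mono_AW := expect_le_union_run rule' T' adapted_A.
have F0 : 0 <= \sum_phi p phi * f set0 phi by apply: sumr_ge0 => phi _; rewrite mulr_ge0.
have PA : \sum_phi p phi * f (dom (run rule T phi) :|: dom (ma_run ch Ta phi)) phi
          = \sum_phi p phi * f (dom (ma_run ch Ta phi) :|: dom (run rule T phi)) phi.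
  by apply: eq_bigr => phi _; rewrite setUC.
lra.
Qed.

End Greedy.
End Adaptive.

Theorem lemma2 (E O : finType) (R : realFieldType) (b : nat)
    (part : E -> 'I_b) (k : 'I_b -> nat)
    (p : {ffun E -> O} -> R) (f : {set E} -> {ffun E -> O} -> R)
    (chw cha : {ffun E -> option O} -> 'I_b -> E) :
  (forall z : 'I_b, 0 < k z <= #|Epart part z|)%N ->
  (forall phi, 0 <= p phi) -> \sum_phi p phi = 1 ->
  (forall S phi, 0 <= f S phi) ->
  adaptive_monotone p f -> adaptive_submodular p f ->
  greedy_choice part (fwc p f) chw ->
  greedy_choice part (favg p f) cha ->
  forall pi : policy E O,
    (forall phi, 0 < p phi -> indep part k (sel pi phi)) ->
    favg_pol p f pi <= 3 * favg_hybrid p f k chw cha.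
Proof.
move=> k_bounds p_ge0 _ f_ge0 mono subm _ greedy_a pi pi_indep.
have k_gt0 z : (0 < k z)%N by case/andP: (k_bounds z).
have pol_run : favg_pol p f pi = \sum_phi p phi * f (dom (run (fun _ => pi) #|E| phi)) phi.
  by apply: eq_bigr => phi _; rewrite /sel prun_run.
rewrite pol_run /favg_hybrid.
under [in X in _ <= 3 * X]eq_bigr do rewrite !greedy_run_run setUC.
apply: (greedy_three_approx p_ge0 mono subm (part := part) k_gt0) => // phi /pi_indep.
by rewrite /sel prun_run.
Qed.
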